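(* Every unit of $A(n,d,\underline{q})$ is of the form $\gamma h_1^{m_1}\cdots h_n^{m_n}$ with $\gamma\in\Bbbk^*$ and $m_1,\ldots,m_n\in\mathbb{Z}$.
   Context: Let $\Bbbk$ be a field, $n,d$ positive integers, and $\underline{q}=(q_1,\ldots,q_n)\in(\Bbbk^* )^n$ with $q_i^d\neq1$ for all $i$. Write $a_d(X)=X^d-1$. The algebra $A(n,d,\underline{q})$ is the $\Bbbk$-algebra generated by $x_i,y_i,h_i,h_i^{-1}$ ($1\le i\le n$) subject to the relations $h_ih_i^{-1}=h_i^{-1}h_i=1$, $x_ih_i=q_ih_ix_i$, $y_ih_i=q_i^{-1}h_iy_i$, $x_iy_i=a_d(q_ih_i)=(q_ih_i)^d-1$, $y_ix_i=a_d(h_i)=h_i^d-1$, and, for $i\neq j$, each of $h_i^{\pm1},x_i,y_i$ commutes with each of $h_j^{\pm1},x_j,y_j$. (Equivalently, it is the tensor product over $\Bbbk$ of the generalized Weyl algebras $\Bbbk[h_i^{\pm1}](\sigma_i,h_i^d-1)$ with $\sigma_i(h_i)=q_ih_i$.) *)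

From HB Require Import structures.
From mathcomp Require Import all_boot all_order all_algebra.
Set Implicit Arguments. Unset Strict Implicit. Unset Printing Implicit Defensive.
Import Order.TTheory GRing.Theory Num.Theory.
Local Open Scope ring_scope.

Definition alg_hom (k : fieldType) (A B : algType k) (f : A -> B) : Prop :=
  [/\ f 1 = 1,
      forall a b, f (a + b) = f a + f b,
      forall a b, f (a * b) = f a * f b &
      forall (c : k) a, f (c *: a) = c *: f a].

(* The defining relations of A(n,d,q) for elements x,y,h,hi (hi = h^{-1})
   of a k-algebra B; a_d(X) = X^d - 1. *)
Definition Arels (k : fieldType) (n d : nat) (q : 'I_n -> k) (B : algType k)
    (x y h hi : 'I_n -> B) : Prop :=
  (forall i, h i * hi i = 1 /\ hi i * h i = 1) /\
  [/\ (forall i, x i * h i = (q i *: h i) * x i),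
      (forall i, y i * h i = ((q i)^-1 *: h i) * y i),
      (forall i, x i * y i = (q i *: h i) ^+ d - 1),
      (forall i, y i * x i = (h i) ^+ d - 1) &
      (forall i j, i != j ->
         forall a b, a \in [:: h i; hi i; x i; y i] ->
                     b \in [:: h j; hi j; x j; y j] -> a * b = b * a)].

(* A (with x,y,h,hi) is the k-algebra presented by generators x_i,y_i,h_i,h_i^{-1}
   and the relations above: the relations hold, and (A,x,y,h,hi) satisfies the
   universal property of the presented algebra. *)
Definition is_A (k : fieldType) (n d : nat) (q : 'I_n -> k) (A : algType k)
    (x y h hi : 'I_n -> A) : Prop :=
  [/\ Arels d q x y h hi,
      (forall (B : algType k) (x' y' h' hi' : 'I_n -> B),
          Arels d q x' y' h' hi' ->
          exists f : A -> B, alg_hom f /\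
            forall i, [/\ f (x i) = x' i, f (y i) = y' i,
                          f (h i) = h' i & f (hi i) = hi' i]) &
      (forall (B : algType k) (f g : A -> B), alg_hom f -> alg_hom g ->
          (forall i, [/\ f (x i) = g (x i), f (y i) = g (y i),
                         f (h i) = g (h i) & f (hi i) = g (hi i)]) ->
          forall a, f a = g a)].

Definition ipow (k : fieldType) (A : algType k) (h hi : A) (m : int) : A :=
  match m with
  | Posz p => h ^+ p
  | Negz p => hi ^+ p.+1
  end.

From HB Require Import structures.
From mathcomp Require Import all_boot all_order all_algebra.
From mathcomp Require Import boolp ring zify.
Import Order.TTheory GRing.Theory Num.Theory.
Set Implicit Arguments. Unset Strict Implicit. Unset Printing Implicit Defensive.
Local Open Scope ring_scope.

(* The relations let A act on functions Z^n x Z^n -> k: x_i, h_i and h_i^-1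
   act by twisted shifts and y_i by a combination of two of them, so the
   universal property gives a morphism [rep] from A to the span of twisted
   shifts, a quantum torus over the group Z^2n.  Ordering Z^2n
   lexicographically, lowest and highest terms multiply in the quantum torus,
   so its units are multiples of single shifts.  On the other side A is
   spanned by the monomials x^a h^m (where x_i^-p stands for y_i^p), and [rep]
   sends x^a h^m to shifts supported in {a} x [m, m + d a^-] (a^- the
   negative part of a), with nonzero
   coefficients at both corners.  Comparing extremal terms, an element whose
   image is a single shift is a multiple of one monomial with a >= 0; for a
   unit and its inverse these exponents add up to 0, so both are 0. *)

Section BigRegroup.
Variables (R : pzRingType) (T : eqType) (M : lmodType R).

Definition listcoef (l : seq (R * T)) (s : T) : R := \sum_(p <- l | p.2 == s) p.1.

Lemma listcoef_notin l s : s \notin map snd l -> listcoef l s = 0.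
Proof.
move=> sl; rewrite /listcoef big1_seq // => p /andP [/eqP ps pl].
by move: sl; rewrite -ps map_f.
Qed.

Lemma big_scale_undup (G : T -> M) (l : seq (R * T)) :
  \sum_(p <- l) p.1 *: G p.2 = \sum_(s <- undup (map snd l)) listcoef l s *: G s.
Proof.
elim: l => [|p l IH]; first by rewrite !big_nil.
rewrite big_cons IH /= /listcoef.
have cons_coef s : \sum_(p0 <- p :: l | p0.2 == s) p0.1 =
    (if p.2 == s then p.1 else 0) + \sum_(p0 <- l | p0.2 == s) p0.1.
  by rewrite big_cons; case: ifP; rewrite ?add0r.
case: ifP => pl.
  under [in RHS]eq_bigr do rewrite cons_coef scalerDl.
  rewrite big_split /=; congr (_ + _).
  rewrite (bigD1_seq p.2) ?mem_undup ?undup_uniq //= eqxx big1 ?addr0 //.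
  by move=> s; rewrite eq_sym => /negbTE ->; rewrite scale0r.
rewrite big_cons cons_coef eqxx -/(listcoef l p.2) listcoef_notin ?pl // addr0.
congr (_ + _); apply: eq_big_seq => s; rewrite mem_undup => sl; rewrite cons_coef.
by case: eqP => [ps|_]; [move: pl; rewrite ps sl | rewrite add0r].
Qed.

End BigRegroup.

Lemma mulr_prod_at (I : eqType) (R : pzRingType) (g : R) j (G : I -> R)
    (r : seq I) : uniq r -> j \in r -> (forall i, i != j -> GRing.comm g (G i)) ->
  g * \prod_(i <- r) G i = \prod_(i <- r) (if i == j then g * G i else G i).
Proof.
move=> + + cG; elim: r => [//|i r IH] /= /andP [ir ur] jr.
rewrite !big_cons; case: (eqVneq i j) => [<-|ij].
  rewrite mulrA; congr (_ * _); apply: eq_big_seq => l lr.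
  by case: eqP => // li; move: ir; rewrite -li lr.
move: jr; rewrite inE eq_sym (negbTE ij) /= => jr.
by rewrite mulrA (cG _ ij) -mulrA IH.
Qed.

Lemma prod_at_lin2 (I : eqType) (K : pzRingType) (R : algType K) j (r : seq I)
    (G : I -> R) c1 c2 (P1 P2 : R) : uniq r -> j \in r ->
  \prod_(i <- r) (if i == j then c1 *: P1 + c2 *: P2 else G i) =
  c1 *: \prod_(i <- r) (if i == j then P1 else G i) +
  c2 *: \prod_(i <- r) (if i == j then P2 else G i).
Proof.
elim: r => [//|i r IH] /= /andP [ir ur] jr.
rewrite !big_cons; case: (eqVneq i j) => [ij|ij].
  subst i; rewrite mulrDl -!scalerAl.
  have off P : \prod_(l <- r) (if l == j then P else G l) = \prod_(l <- r) G l.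
    apply: eq_big_seq => l lr.
    by case: eqP => // lj; move: ir; rewrite -lj lr.
  by rewrite !off.
move: jr; rewrite inE eq_sym (negbTE ij) /= => jr.
by rewrite IH // mulrDr -!scalerAr.
Qed.

Lemma seq_ex_min_key (T : eqType) disp (O : orderType disp) (key : T -> O)
    (S : seq T) : S != [::] ->
  exists2 m, m \in S & forall s, s \in S -> (key m <= key s)%O.
Proof.
elim: S => [//|a S IH] _.
have [->|SN] := eqVneq S [::].
  by exists a; rewrite ?mem_seq1 // => s; rewrite mem_seq1 => /eqP ->.
have [m mS minm] := IH SN.
have [am|ma] := leP (key a) (key m).
  exists a; rewrite ?inE ?eqxx // => s; rewrite inE => /orP [/eqP ->//|/minm].
  exact: le_trans.
exists m; rewrite ?inE ?mS ?orbT // => s; rewrite inE => /orP [/eqP ->|/minm //].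
exact: ltW.
Qed.

Section RelMin.
Variables (T : eqType) (R : T -> T -> Prop).
Hypothesis Rtr : forall a b c, R a b -> R b c -> R a c.
Hypothesis Rtot : forall a b, a = b \/ R a b \/ R b a.

Lemma seq_ex_minR (S : seq T) : S != [::] ->
  exists2 m, m \in S & forall s, s \in S -> s = m \/ R m s.
Proof.
elim: S => [//|a S IH] _.
have [->|SN] := eqVneq S [::].
  by exists a; rewrite ?mem_seq1 // => s; rewrite mem_seq1 => /eqP ->; left.
have [m mS minm] := IH SN.
case: (Rtot a m) => [am|[am|ma]].
- exists m; rewrite ?inE ?mS ?orbT // => s.
  by rewrite inE => /orP [/eqP ->|/minm //]; left.
- exists a; rewrite ?inE ?eqxx // => s.
  rewrite inE => /orP [/eqP ->|/minm [->|ms]]; [by left|by right|].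
  by right; apply: Rtr ms.
- exists m; rewrite ?inE ?mS ?orbT // => s.
  by rewrite inE => /orP [/eqP ->|/minm //]; right.
Qed.

End RelMin.

Section AddMin.
Variables (T : zmodType) (R : T -> T -> Prop).
Hypothesis Rtr : forall a b c, R a b -> R b c -> R a c.
Hypothesis Rirr : forall a, ~ R a a.
Hypothesis RD : forall a b c, R a b -> R (a + c) (b + c).

Lemma addR_min_eq a0 b0 a b : (a = a0 \/ R a0 a) -> (b = b0 \/ R b0 b) ->
  a + b = a0 + b0 -> a = a0 /\ b = b0.
Proof.
have RDl x y z : R x y -> R (z + x) (z + y).
  by move=> r; rewrite ![z + _]addrC; apply: RD.
case=> [->|ra]; case=> [->|rb] E //; exfalso; apply: (@Rirr (a0 + b0)).
- by rewrite -{2}E; apply: RDl.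
- by rewrite -{2}E; apply: RD.
- by rewrite -{2}E; apply: (@Rtr _ (a + b0)); [apply: RD|apply: RDl].
Qed.

End AddMin.

Section Lex.
Variable n : nat.
Local Notation Zn := {ffun 'I_n -> int}.

Definition lexlt (s t : Zn) : Prop :=
  exists j : 'I_n, (forall i : 'I_n, (i < j)%N -> s i = t i) /\ s j < t j.

Lemma lexlt_irr s : ~ lexlt s s.
Proof. by case=> j [_]; rewrite ltxx. Qed.

Lemma lexlt_trans s t u : lexlt s t -> lexlt t u -> lexlt s u.
Proof.
case=> j1 [e1 l1] [j2 [e2 l2]].
case: (ltngtP j1 j2) => [j12|j21|/val_inj j12].
- exists j1; split; last by rewrite -(e2 _ j12).
  by move=> i ij; rewrite e1 // e2 //; apply: ltn_trans j12.
- exists j2; split; last by rewrite (e1 _ j21).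
  by move=> i ij; rewrite e1 ?e2 //; apply: ltn_trans j21.
- subst j2; exists j1; split; last exact: lt_trans l2.
  by move=> i ij; rewrite e1 ?e2.
Qed.

Lemma lexlt_total s t : s = t \/ lexlt s t \/ lexlt t s.
Proof.
have [/existsP [i0 si0]|] := boolP [exists i, s i != t i]; last first.
  move=> st; left; apply/ffunP => i; apply/eqP; apply: contraNT st => sti.
  by apply/existsP; exists i.
case: (@arg_minnP _ i0 (fun i => s i != t i) val si0) => j sj jmin; right.
have e (i : 'I_n) : (i < j)%N -> s i = t i.
  by move=> ij; apply/eqP; apply: contraTT ij => /jmin; rewrite -leqNgt.
case: (ltgtP (s j) (t j)) => [st|ts|st].
- by left; exists j.
- by right; exists j; split => // i ij; rewrite e.
- by move: sj; rewrite st eqxx.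
Qed.

Lemma lexltD s t u : lexlt s t -> lexlt (s + u) (t + u).
Proof.
case=> j [e l]; exists j; split => [i ij|]; rewrite !ffunE; first by rewrite e.
by rewrite ltrD2r.
Qed.

Definition lexlt2 (s t : Zn * Zn) : Prop :=
  lexlt s.1 t.1 \/ (s.1 = t.1 /\ lexlt s.2 t.2).

Lemma lexlt2_irr s : ~ lexlt2 s s.
Proof. by case=> [/lexlt_irr|[_ /lexlt_irr]]. Qed.

Lemma lexlt2_trans s t u : lexlt2 s t -> lexlt2 t u -> lexlt2 s u.
Proof.
case=> [a|[a b]] [c|[c e]].
- by left; apply: lexlt_trans c.
- by left; rewrite -c.
- by left; rewrite a.
- by right; split; [rewrite a|apply: lexlt_trans e].
Qed.

Lemma lexlt2_total s t : s = t \/ lexlt2 s t \/ lexlt2 t s.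
Proof.
case: (lexlt_total s.1 t.1) => [e1|[c|c]]; last 2 first.
- by right; left; left.
- by right; right; left.
case: (lexlt_total s.2 t.2) => [e2|[c|c]].
- by left; case: s t e1 e2 => [a b] [c e] /= -> ->.
- by right; left; right.
- by right; right; right.
Qed.

Lemma lexlt2D s t u : lexlt2 s t -> lexlt2 (s + u) (t + u).
Proof.
case=> [a|[a b]]; first by left; apply: lexltD.
by right; split; [rewrite /= a | apply: lexltD].
Qed.

Lemma lower_bounds_add_eq (s t m1 m2 : Zn) :
  (forall i, m1 i <= s i) -> (forall i, m2 i <= t i) -> s + t = m1 + m2 ->
  s = m1 /\ t = m2.
Proof.
move=> le1 le2 E.
have e i : s i = m1 i /\ t i = m2 i.
  have := congr1 (fun f : Zn => f i) E; rewrite /= !ffunE.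
  have := le1 i; have := le2 i; move: (s i) (t i) (m1 i) (m2 i) => a b c e; lia.
by split; apply/ffunP => i; case: (e i).
Qed.

End Lex.

(** * Induction over the generators *)

Section PresentedInduction.
Variables (k : fieldType) (A : algType k) (P : A -> Prop).
Hypothesis P1 : P 1.
Hypothesis Plin : forall c u v, P u -> P v -> P (c *: u + v).
Hypothesis PM : forall u v, P u -> P v -> P (u * v).

Definition Pmem : {pred A} := fun a => `[< P a >].

Lemma Pmem_subalg_closed : GRing.subsemialg_closed Pmem.
Proof.
have P0 : P 0 by have := Plin (-1) P1 P1; rewrite scaleN1r addNr.
split; first by apply/asboolP.
- split; first by apply/asboolP.
  move=> u v /asboolP Pu /asboolP Pv; apply/asboolP.
  by have := Plin 1 Pu Pv; rewrite scale1r.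
- move=> c u /asboolP Pu; apply/asboolP.
  by have := Plin c Pu P0; rewrite addr0.
- by move=> u v /asboolP Pu /asboolP Pv; apply/asboolP; apply: PM.
Qed.

HB.instance Definition _ := GRing.isSubalgClosed.Build k A Pmem Pmem_subalg_closed.

Record Psubalg := PsubalgVal { Psubalg_val : A; _ : Psubalg_val \in Pmem }.
HB.instance Definition _ := [isSub for Psubalg_val].
HB.instance Definition _ := [Choice of Psubalg by <:].
HB.instance Definition _ := [SubChoice_isSubAlgebra of Psubalg by <:].

(* The subalgebra cut out by P satisfies the relations, so the universal
   property retracts A onto it; by uniqueness the retraction is the identity. *)
Lemma is_A_ind n d (q : 'I_n -> k) (x y h hi : 'I_n -> A) :
  is_A d q x y h hi ->
  (forall i, [/\ P (x i), P (y i), P (h i) & P (hi i)]) -> forall a, P a.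
Proof.
case=> rels ex unique Pgen a.
have mem b : P b -> b \in Pmem by move=> Pb; apply/asboolP.
have [Px Py Ph Phi] : [/\ forall i, P (x i), forall i, P (y i),
    forall i, P (h i) & forall i, P (hi i)] by split=> i; case: (Pgen i).
pose sub (g : 'I_n -> A) (Pg : forall i, P (g i)) i := PsubalgVal (mem _ (Pg i)).
pose xs := sub x Px; pose ys := sub y Py; pose hs := sub h Ph; pose his := sub hi Phi.
have rels' : Arels d q xs ys hs his.
  case: rels => [inv [r1 r2 r3 r4 r5]]; split.
    by move=> i; split; apply: val_inj; case: (inv i).
  split=> [i|i|i|i|i j ij u v iu jv]; apply: val_inj.
  - exact: r1.
  - exact: r2.
  - by rewrite [LHS]/= r3 rmorphB rmorphXn rmorph1.
  - by rewrite [LHS]/= r4 rmorphB rmorphXn rmorph1.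
  - apply: (r5 i j ij).
      by move: iu; rewrite !inE => /or4P [] /eqP -> /=; rewrite eqxx ?orbT.
    by move: jv; rewrite !inE => /or4P [] /eqP -> /=; rewrite eqxx ?orbT.
have [f [[f1 fD fM fZ] fgen]] := ex _ xs ys hs his rels'.
have valf : alg_hom (fun b => val (f b)).
  by split=> [|b c|b c|c b]; rewrite ?f1 ?fD ?fM ?fZ.
have -> : a = val (f a).
  apply: (unique A _ _ _ valf) => // i.
  by case: (fgen i) => -> -> -> ->.
by case: (f a) => /= b /asboolP.
Qed.

End PresentedInduction.

(** * The quantum torus of twisted shifts *)

Section LinearOperators.
Variables (k : fieldType) (W : zmodType).

(* Linear operators on all functions W -> k: they form an algebra without any
   finiteness bookkeeping. *)
Record linop := Linop {
  lapp : (W -> k) -> (W -> k);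
  lappDr : forall F G w, lapp (fun z => F z + G z) w = lapp F w + lapp G w;
  lappZr : forall c F w, lapp (fun z => c * F z) w = c * lapp F w }.

Lemma linop_ext (O1 O2 : linop) : (forall F w, lapp O1 F w = lapp O2 F w) -> O1 = O2.
Proof.
case: O1 O2 => f1 D1 Z1 [f2 D2 Z2] /= E.
have ef : f1 = f2 by apply: funext => F; apply: funext => w; apply: E.
subst f2; congr Linop; apply: Prop_irrelevance.
Qed.

HB.instance Definition _ := gen_eqMixin linop.
HB.instance Definition _ := gen_choiceMixin linop.

Program Definition linop0 : linop := @Linop (fun F w => 0) _ _.
Next Obligation. by rewrite addr0. Qed.
Next Obligation. by rewrite mulr0. Qed.
Program Definition linop_add (O1 O2 : linop) : linop :=
  @Linop (fun F w => lapp O1 F w + lapp O2 F w) _ _.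
Next Obligation. by rewrite !lappDr addrACA. Qed.
Next Obligation. by rewrite !lappZr mulrDr. Qed.
Program Definition linop_opp (O : linop) : linop := @Linop (fun F w => - lapp O F w) _ _.
Next Obligation. by rewrite lappDr opprD. Qed.
Next Obligation. by rewrite lappZr mulrN. Qed.
Program Definition linop1 : linop := @Linop (fun F w => F w) _ _.
Program Definition linop_mul (O1 O2 : linop) : linop :=
  @Linop (fun F w => lapp O1 (lapp O2 F) w) _ _.
Next Obligation.
have -> : lapp O2 (fun z => F z + G z) = (fun z => lapp O2 F z + lapp O2 G z).
  by apply: funext => z; rewrite lappDr.
by rewrite lappDr.
Qed.
Next Obligation.
have -> : lapp O2 (fun z => c * F z) = (fun z => c * lapp O2 F z).
  by apply: funext => z; rewrite lappZr.
by rewrite lappZr.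
Qed.
Program Definition linop_scale (c : k) (O : linop) : linop :=
  @Linop (fun F w => c * lapp O F w) _ _.
Next Obligation. by rewrite lappDr mulrDr. Qed.
Next Obligation. by rewrite lappZr mulrCA. Qed.

Lemma linop_addA : associative linop_add.
Proof. by move=> a b c; apply: linop_ext => F w /=; rewrite addrA. Qed.
Lemma linop_addC : commutative linop_add.
Proof. by move=> a b; apply: linop_ext => F w /=; rewrite addrC. Qed.
Lemma linop_add0 : left_id linop0 linop_add.
Proof. by move=> a; apply: linop_ext => F w /=; rewrite add0r. Qed.
Lemma linop_addN : left_inverse linop0 linop_opp linop_add.
Proof. by move=> a; apply: linop_ext => F w /=; rewrite addNr. Qed.
HB.instance Definition _ :=
  GRing.isZmodule.Build linop linop_addA linop_addC linop_add0 linop_addN.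

Lemma linop_mulA : associative linop_mul.
Proof. by move=> a b c; apply: linop_ext. Qed.
Lemma linop_mul1 : left_id linop1 linop_mul.
Proof. by move=> a; apply: linop_ext. Qed.
Lemma linop_mulr1 : right_id linop1 linop_mul.
Proof. by move=> a; apply: linop_ext => F w /=; congr lapp; apply: funext. Qed.
Lemma linop_mulDl : left_distributive linop_mul +%R.
Proof. by move=> a b c; apply: linop_ext. Qed.
Lemma linop_mulDr : right_distributive linop_mul +%R.
Proof. by move=> a b c; apply: linop_ext => F w /=; rewrite lappDr. Qed.
Lemma linop1_neq0 : linop1 != 0.
Proof.
apply/eqP => /(congr1 (fun O : linop => lapp O (fun _ => 1) 0)) /= /eqP.
by rewrite oner_eq0.
Qed.
HB.instance Definition _ := GRing.Zmodule_isNzRing.Build linop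
  linop_mulA linop_mul1 linop_mulr1 linop_mulDl linop_mulDr linop1_neq0.

Lemma linop_scaleA a b v : linop_scale a (linop_scale b v) = linop_scale (a * b) v.
Proof. by apply: linop_ext => F w /=; rewrite mulrA. Qed.
Lemma linop_scale1 : left_id 1 linop_scale.
Proof. by move=> a; apply: linop_ext => F w /=; rewrite mul1r. Qed.
Lemma linop_scaleDr : right_distributive linop_scale +%R.
Proof. by move=> a b c; apply: linop_ext => F w /=; rewrite mulrDr. Qed.
Lemma linop_scaleDl v : {morph linop_scale^~ v: a b / a + b}.
Proof. by move=> a b; apply: linop_ext => F w /=; rewrite mulrDl. Qed.
HB.instance Definition _ := GRing.Zmodule_isLmodule.Build k linop
  linop_scaleA linop_scale1 linop_scaleDr linop_scaleDl.
Lemma linop_scaleAl (a : k) (u v : linop) : a *: (u * v) = (a *: u) * v.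
Proof. by apply: linop_ext. Qed.
HB.instance Definition _ := GRing.Lmodule_isLalgebra.Build k linop linop_scaleAl.
Lemma linop_scaleAr (a : k) (u v : linop) : a *: (u * v) = u * (a *: v).
Proof. by apply: linop_ext => F w /=; rewrite -(lappZr u a (lapp v F)). Qed.
HB.instance Definition _ := GRing.Lalgebra_isAlgebra.Build k linop linop_scaleAr.

Lemma lappDl (O1 O2 : linop) F w : lapp (O1 + O2) F w = lapp O1 F w + lapp O2 F w.
Proof. by []. Qed.
Lemma lappZl c (O : linop) F w : lapp (c *: O) F w = c * lapp O F w.
Proof. by []. Qed.
Lemma lappMl (O1 O2 : linop) F w : lapp (O1 * O2) F w = lapp O1 (lapp O2 F) w.
Proof. by []. Qed.
Lemma lapp1l F w : lapp (1 : linop) F w = F w.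
Proof. by []. Qed.
Lemma lapp0l F w : lapp (0 : linop) F w = 0.
Proof. by []. Qed.

End LinearOperators.

Section QuantumTorus.
Variables (k : fieldType) (n : nat) (q : 'I_n -> k).
Hypothesis q_neq0 : forall i, q i != 0.
Local Notation Zn := {ffun 'I_n -> int}.
Definition Z2n := (Zn * Zn)%type.
Local Notation linop := (linop k Z2n).

(* [shift (a, m)] below plays the monomial x^a h^m: h_i translates, and x_i
   translates and multiplies by q_i to the power of the h_i-degree, which
   encodes x_i h_i = q_i h_i x_i. *)
Definition twist (s w : Z2n) : k := \prod_(i < n) q i ^ (s.1 i * w.2 i).
Definition cocycle (s t : Z2n) : k := \prod_(i < n) q i ^ (- (t.1 i * s.2 i)).

Lemma twist_neq0 s w : twist s w != 0.
Proof. by apply/prodf_neq0 => i _; apply: expfz_neq0. Qed.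
Lemma cocycle_neq0 s t : cocycle s t != 0.
Proof. by apply/prodf_neq0 => i _; apply: expfz_neq0. Qed.

Lemma twistDl s t w : twist (s + t) w = twist s w * twist t w.
Proof.
rewrite /twist -big_split /=; apply: eq_bigr => i _.
by rewrite ffunE mulrDl expfzDr.
Qed.

Lemma twistBr t w s : twist t (w - s) = twist t w * cocycle s t.
Proof.
rewrite /twist /cocycle -big_split /=; apply: eq_bigr => i _.
by rewrite !ffunE mulrDr mulrN expfzDr.
Qed.

Program Definition shift (s : Z2n) : linop :=
  @Linop _ _ (fun F w => twist s w * F (w - s)) _ _.
Next Obligation. by rewrite mulrDr. Qed.
Next Obligation. by rewrite mulrCA. Qed.

Lemma lapp_shift s F w : lapp (shift s) F w = twist s w * F (w - s).
Proof. by []. Qed.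

Lemma shiftM s t : shift s * shift t = cocycle s t *: shift (s + t).
Proof.
apply: linop_ext => F w; rewrite lappMl lappZl !lapp_shift twistBr twistDl.
by rewrite opprD addrA; ring.
Qed.

Lemma shift0 : shift 0 = 1.
Proof.
apply: linop_ext => F w; rewrite lapp_shift lapp1l subr0 /twist big1 ?mul1r //.
by move=> i _; rewrite ffunE mul0r expr0z.
Qed.

(* Evaluating at the point mass at 0 and untwisting reads off the coefficient
   of [shift w]. *)
Definition tcoef (O : linop) (w : Z2n) : k :=
  lapp O (fun z => (z == 0)%:R) w / twist w w.

Lemma tcoef_shift s w : tcoef (shift s) w = (w == s)%:R.
Proof.
rewrite /tcoef lapp_shift subr_eq0; case: eqP => [->|_].
  by rewrite mulr1 divff // twist_neq0.
by rewrite mulr0 mul0r.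
Qed.
Lemma tcoefD O1 O2 w : tcoef (O1 + O2) w = tcoef O1 w + tcoef O2 w.
Proof. by rewrite /tcoef lappDl mulrDl. Qed.
Lemma tcoefZ c O w : tcoef (c *: O) w = c * tcoef O w.
Proof. by rewrite /tcoef lappZl mulrA. Qed.
Lemma tcoefN O w : tcoef (- O) w = - tcoef O w.
Proof. by rewrite -scaleN1r tcoefZ mulN1r. Qed.
Lemma tcoef0 w : tcoef 0 w = 0.
Proof. by rewrite /tcoef lapp0l mul0r. Qed.
Lemma tcoef1 w : tcoef 1 w = (w == 0)%:R.
Proof. by rewrite -shift0 tcoef_shift. Qed.
Lemma tcoefZ_shift c s w : tcoef (c *: shift s) w = if w == s then c else 0.
Proof. by rewrite tcoefZ tcoef_shift; case: eqP; rewrite ?mulr1 ?mulr0. Qed.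
Lemma tcoef_sum (I : Type) (r : seq I) (G : I -> linop) w :
  tcoef (\sum_(i <- r) G i) w = \sum_(i <- r) tcoef (G i) w.
Proof.
elim: r => [|a r IH]; first by rewrite !big_nil tcoef0.
by rewrite !big_cons tcoefD IH.
Qed.

Lemma tcoef_sum_single (U : seq Z2n) (C : Z2n -> k) (G : Z2n -> linop) z f :
  uniq U -> f \in U -> C f != 0 -> tcoef (G f) z != 0 ->
  (forall g, g \in U -> g != f -> tcoef (G g) z = 0) ->
  tcoef (\sum_(g <- U) C g *: G g) z != 0.
Proof.
move=> uU fU Cf Gf others; rewrite tcoef_sum (bigD1_seq f) //= big1_seq ?addr0.
  by rewrite tcoefZ mulf_neq0.
by move=> g /andP [gf gU]; rewrite tcoefZ others ?mulr0.
Qed.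

Definition qtorus (O : linop) :=
  exists l : seq (k * Z2n), O = \sum_(p <- l) p.1 *: shift p.2.

Definition shift_expansion (O : linop) (U : seq Z2n) :=
  uniq U /\ O = \sum_(s <- U) tcoef O s *: shift s.

Lemma tcoef_shift_sum (l : seq (k * Z2n)) w :
  tcoef (\sum_(p <- l) p.1 *: shift p.2) w = listcoef l w.
Proof.
rewrite tcoef_sum /listcoef [RHS]big_mkcond /=; apply: eq_bigr => p _.
by rewrite tcoefZ_shift eq_sym.
Qed.

Lemma qtorus_expansion O : qtorus O ->
  exists2 U, shift_expansion O U & forall w, tcoef O w != 0 -> w \in U.
Proof.
case=> l E; exists (undup (map snd l)); first split.
- exact: undup_uniq.
- by rewrite {1}E big_scale_undup; apply: eq_bigr => s _; rewrite E tcoef_shift_sum.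
- move=> w; rewrite E tcoef_shift_sum mem_undup; apply: contraR.
  by move/listcoef_notin => ->.
Qed.

Lemma qtorus_shift s : qtorus (shift s).
Proof. by exists [:: (1, s)]; rewrite big_seq1 scale1r. Qed.
Lemma qtorusD O1 O2 : qtorus O1 -> qtorus O2 -> qtorus (O1 + O2).
Proof. by case=> l1 -> [l2 ->]; exists (l1 ++ l2); rewrite big_cat. Qed.
Lemma qtorusZ c O : qtorus O -> qtorus (c *: O).
Proof.
case=> l ->; exists [seq (c * p.1, p.2) | p <- l].
by rewrite big_map scaler_sumr; apply: eq_bigr => p _; rewrite scalerA.
Qed.
Lemma qtorusN O : qtorus O -> qtorus (- O).
Proof. by move=> H; rewrite -scaleN1r; apply: qtorusZ. Qed.
Lemma qtorusM O1 O2 : qtorus O1 -> qtorus O2 -> qtorus (O1 * O2).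
Proof.
case=> l1 -> [l2 ->].
exists [seq (p.1 * r.1 * cocycle p.2 r.2, p.2 + r.2) | p <- l1, r <- l2].
rewrite big_allpairs_dep mulr_suml; apply: eq_bigr => p _.
rewrite mulr_sumr; apply: eq_bigr => r _ /=.
by rewrite -scalerAl -scalerAr shiftM !scalerA; congr (_ *: _); ring.
Qed.

Lemma tcoefM O1 O2 U1 U2 w : shift_expansion O1 U1 -> shift_expansion O2 U2 ->
  tcoef (O1 * O2) w = \sum_(s <- U1) \sum_(t <- U2)
     tcoef O1 s * tcoef O2 t * cocycle s t * (w == s + t)%:R.
Proof.
case=> _ E1 [_ E2]; rewrite {1}E1 {1}E2 mulr_suml tcoef_sum.
apply: eq_bigr => s _; rewrite mulr_sumr tcoef_sum; apply: eq_bigr => t _.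
by rewrite -scalerAl -scalerAr shiftM !scalerA tcoefZ tcoef_shift mulrA.
Qed.

Lemma tcoefM_term_eq0 O1 O2 s t w :
  (tcoef O1 s != 0 -> tcoef O2 t != 0 -> w = s + t -> False) ->
  tcoef O1 s * tcoef O2 t * cocycle s t * (w == s + t)%:R = 0.
Proof.
move=> nosum; have [->|n1] := eqVneq (tcoef O1 s) 0; first by rewrite !mul0r.
have [->|n2] := eqVneq (tcoef O2 t) 0; first by rewrite mulr0 !mul0r.
by case: eqP => [/(nosum n1 n2)|_] //; rewrite mulr0.
Qed.

Lemma tcoefM_unique O1 O2 U1 U2 s0 t0 :
  shift_expansion O1 U1 -> shift_expansion O2 U2 -> s0 \in U1 -> t0 \in U2 ->
  (forall s t, tcoef O1 s != 0 -> tcoef O2 t != 0 ->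
      s + t = s0 + t0 -> s = s0 /\ t = t0) ->
  tcoef (O1 * O2) (s0 + t0) = tcoef O1 s0 * tcoef O2 t0 * cocycle s0 t0.
Proof.
move=> F1 F2 s0U t0U uniq_sum; rewrite (tcoefM (s0 + t0) F1 F2).
have [uU1 _] := F1; have [uU2 _] := F2.
have other s t : (s != s0) || (t != t0) ->
    tcoef O1 s * tcoef O2 t * cocycle s t * (s0 + t0 == s + t)%:R = 0.
  move=> st; apply: tcoefM_term_eq0 => n1 n2 /esym /(uniq_sum _ _ n1 n2) [e1 e2].
  by move: st; rewrite e1 e2 !eqxx.
rewrite (bigD1_seq s0) //= (bigD1_seq t0) //= eqxx mulr1.
rewrite big1_seq ?addr0 => [|t /andP [tt0 _]]; last by apply: other; rewrite tt0 orbT.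
rewrite big1_seq ?addr0 // => s /andP [ss0 _].
by rewrite big1_seq // => t _; apply: other; rewrite ss0.
Qed.

Lemma tcoefM_unique_neq0 O1 O2 s0 t0 : qtorus O1 -> qtorus O2 ->
  tcoef O1 s0 != 0 -> tcoef O2 t0 != 0 ->
  (forall s t, tcoef O1 s != 0 -> tcoef O2 t != 0 ->
      s + t = s0 + t0 -> s = s0 /\ t = t0) ->
  tcoef (O1 * O2) (s0 + t0) != 0.
Proof.
move=> /qtorus_expansion [U1 F1 S1] /qtorus_expansion [U2 F2 S2] n1 n2 uniq_sum.
rewrite (tcoefM_unique F1 F2 (S1 _ n1) (S2 _ n2) uniq_sum).
by apply/mulf_neq0; [apply/mulf_neq0|exact: cocycle_neq0].
Qed.

Lemma tcoefM_neq0 O1 O2 w : qtorus O1 -> qtorus O2 -> tcoef (O1 * O2) w != 0 ->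
  exists s t, [/\ tcoef O1 s != 0, tcoef O2 t != 0 & w = s + t].
Proof.
move=> /qtorus_expansion [U1 F1 _] /qtorus_expansion [U2 F2 _].
rewrite (tcoefM w F1 F2); apply: contraNP => nosum.
rewrite big1 // => s _; rewrite big1 // => t _; apply: tcoefM_term_eq0 => n1 n2 wst.
by apply: nosum; exists s, t.
Qed.

Lemma qtorus_ex_minR (R : Z2n -> Z2n -> Prop) O :
  (forall a b c, R a b -> R b c -> R a c) ->
  (forall a b, a = b \/ R a b \/ R b a) -> qtorus O -> O != 0 ->
  exists2 s0, tcoef O s0 != 0 & forall s, tcoef O s != 0 -> s = s0 \/ R s0 s.
Proof.
move=> Rtr Rtot /qtorus_expansion [U [_ EU] suppU] nO.
have : [seq s <- U | tcoef O s != 0] != [::].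
  apply: contra_neq nO => U0; rewrite EU (bigID (fun s => tcoef O s != 0)) /=.
  rewrite -big_filter U0 big_nil add0r big1 // => s /negPn /eqP ->.
  by rewrite scale0r.
case/(seq_ex_minR Rtr Rtot) => s0; rewrite mem_filter => /andP [ns0 _] min0.
by exists s0 => // s ns; apply: min0; rewrite mem_filter ns suppU.
Qed.

(* The product of the lowest terms of two factors is the lowest term of
   their product. *)
Lemma qtorus_unit_lowest_sum0 (R : Z2n -> Z2n -> Prop) O1 O2 s0 t0 :
  (forall a b c, R a b -> R b c -> R a c) -> (forall a, ~ R a a) ->
  (forall a b c, R a b -> R (a + c) (b + c)) ->
  qtorus O1 -> qtorus O2 -> O1 * O2 = 1 ->
  tcoef O1 s0 != 0 -> (forall s, tcoef O1 s != 0 -> s = s0 \/ R s0 s) ->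
  tcoef O2 t0 != 0 -> (forall t, tcoef O2 t != 0 -> t = t0 \/ R t0 t) ->
  s0 + t0 = 0.
Proof.
move=> Rtr Rirr RD Q1 Q2 E n1 min1 n2 min2.
have : tcoef (O1 * O2) (s0 + t0) != 0.
  apply: tcoefM_unique_neq0 => // s t m1 m2.
  exact: (addR_min_eq Rtr Rirr RD (min1 _ m1) (min2 _ m2)).
by rewrite E tcoef1; case: (s0 + t0 =P 0) => // _; rewrite eqxx.
Qed.

Lemma qtorus_unit O1 O2 : qtorus O1 -> qtorus O2 -> O1 * O2 = 1 ->
  exists s0 t0, [/\ s0 + t0 = 0, (forall w, tcoef O1 w != 0 -> w = s0)
                  & (forall w, tcoef O2 w != 0 -> w = t0)].
Proof.
move=> Q1 Q2 E.
have nO1 : O1 != 0 by apply: contra_eq_neq E => ->; rewrite mul0r eq_sym oner_neq0.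
have nO2 : O2 != 0 by apply: contra_eq_neq E => ->; rewrite mulr0 eq_sym oner_neq0.
pose gt (s t : Z2n) := lexlt2 t s.
have gt_trans (a b c : Z2n) : gt a b -> gt b c -> gt a c.
  by move=> ab bc; apply: lexlt2_trans bc ab.
have gt_total (a b : Z2n) : a = b \/ gt a b \/ gt b a.
  by case: (lexlt2_total a b) => [|[]]; auto.
have gtD (a b c : Z2n) : gt a b -> gt (a + c) (b + c) by apply: lexlt2D.
have [s0 n1 min1] := qtorus_ex_minR (@lexlt2_trans _) (@lexlt2_total _) Q1 nO1.
have [t0 n2 min2] := qtorus_ex_minR (@lexlt2_trans _) (@lexlt2_total _) Q2 nO2.
have [s1 m1 max1] := qtorus_ex_minR gt_trans gt_total Q1 nO1.
have [t1 m2 max2] := qtorus_ex_minR gt_trans gt_total Q2 nO2.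
have st0 := qtorus_unit_lowest_sum0 (@lexlt2_trans _) (@lexlt2_irr _) (@lexlt2D _)
  Q1 Q2 E n1 min1 n2 min2.
have st1 := qtorus_unit_lowest_sum0 gt_trans (@lexlt2_irr _) gtD Q1 Q2 E m1 max1 m2 max2.
have [e1 e2] : s1 = s0 /\ t1 = t0.
  apply: (addR_min_eq (@lexlt2_trans _) (@lexlt2_irr _) (@lexlt2D _)
    (min1 _ m1) (min2 _ m2)).
  by rewrite st0 st1.
subst s1 t1; exists s0, t0; split => // w nw.
- case: (min1 _ nw) => // lt0; case: (max1 _ nw) => // lt1.
  by case: (lexlt2_irr (lexlt2_trans lt0 lt1)).
- case: (min2 _ nw) => // lt0; case: (max2 _ nw) => // lt1.
  by case: (lexlt2_irr (lexlt2_trans lt0 lt1)).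
Qed.

Definition box_support (O : linop) (a m M : Zn) :=
  [/\ qtorus O,
      forall w, tcoef O w != 0 -> w.1 = a /\ forall i, m i <= w.2 i <= M i,
      tcoef O (a, m) != 0 & tcoef O (a, M) != 0].

Lemma box_supportM O1 O2 a1 m1 M1 a2 m2 M2 :
  box_support O1 a1 m1 M1 -> box_support O2 a2 m2 M2 ->
  box_support (O1 * O2) (a1 + a2) (m1 + m2) (M1 + M2).
Proof.
move=> [Q1 S1 c1 C1] [Q2 S2 c2 C2].
have corner (b1 b2 : Zn) : tcoef O1 (a1, b1) != 0 -> tcoef O2 (a2, b2) != 0 ->
    (forall s t, tcoef O1 s != 0 -> tcoef O2 t != 0 ->
       s.2 + t.2 = b1 + b2 -> s.2 = b1 /\ t.2 = b2) ->
    tcoef (O1 * O2) (a1 + a2, b1 + b2) != 0.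
  move=> n1 n2 eq2; have -> : (a1 + a2, b1 + b2) = (a1, b1) + (a2, b2) :> Z2n by [].
  apply: tcoefM_unique_neq0 => // -[s1 s2] [t1 t2] ns nt /(congr1 snd) st.
  have [/= -> _] := S1 _ ns; have [/= -> _] := S2 _ nt.
  by have [/= -> ->] := eq2 _ _ ns nt st.
split.
- exact: qtorusM.
- move=> w /(tcoefM_neq0 Q1 Q2) [s [t [ns nt ->]]].
  have [sa sb] := S1 _ ns; have [ta tb] := S2 _ nt.
  split=> [|i]; first by rewrite /= sa ta.
  have /andP [? ?] := sb i; have /andP [? ?] := tb i.
  by rewrite /= !ffunE !lerD.
- apply: corner => // s t ns nt; apply: lower_bounds_add_eq => i.
  + by have [_ /(_ i) /andP []] := S1 _ ns.
  + by have [_ /(_ i) /andP []] := S2 _ nt.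
- apply: corner => // s t ns nt st.
  suff [<- <-] : M1 = s.2 /\ M2 = t.2 by [].
  apply: lower_bounds_add_eq (esym st) => i.
  + by have [_ /(_ i) /andP []] := S1 _ ns.
  + by have [_ /(_ i) /andP []] := S2 _ nt.
Qed.

Lemma box_support_shift c s : c != 0 -> box_support (c *: shift s) s.1 s.2 s.2.
Proof.
move=> c0; split.
- exact/qtorusZ/qtorus_shift.
- move=> w; rewrite tcoefZ_shift; case: (w =P s) => [->|_]; last by rewrite eqxx.
  by move=> _; split => // i; rewrite lexx.
- by rewrite tcoefZ_shift -surjective_pairing eqxx.
- by rewrite tcoefZ_shift -surjective_pairing eqxx.
Qed.

Lemma box_support_prod (I : Type) (r : seq I) (G : I -> linop) (a m M : I -> Zn) :
  (forall i, box_support (G i) (a i) (m i) (M i)) ->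
  box_support (\prod_(i <- r) G i)
    (\sum_(i <- r) a i) (\sum_(i <- r) m i) (\sum_(i <- r) M i).
Proof.
move=> B; elim: r => [|i r IH]; last by rewrite !big_cons; apply: box_supportM.
by have := box_support_shift 0 (oner_neq0 k); rewrite !big_nil scale1r shift0.
Qed.

Lemma box_supportX O a m M p : box_support O a m M ->
  box_support (O ^+ p) (a *+ p) (m *+ p) (M *+ p).
Proof.
move=> B; have := @box_support_prod nat (index_iota 0 p)
  (fun=> O) (fun=> a) (fun=> m) (fun=> M).
by rewrite prodr_const_nat !sumr_const_nat !subn0; apply.
Qed.

(** * The relations of A among twisted shifts *)

Definition evec (i : 'I_n) (z : int) : Zn := [ffun l => if l == i then z else 0].

Lemma evecD i a b : evec i (a + b) = evec i a + evec i b.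
Proof. by apply/ffunP => l; rewrite !ffunE; case: eqP; rewrite ?addr0. Qed.
Lemma evec0 i : evec i 0 = 0.
Proof. by apply/ffunP => l; rewrite !ffunE; case: eqP. Qed.
Lemma evecMn i z p : evec i z *+ p = evec i (z *+ p).
Proof. by apply/ffunP => l; rewrite ffunMnE !ffunE; case: eqP; rewrite ?mul0rn. Qed.
Lemma evec_eq0 i z : (evec i z == 0) = (z == 0).
Proof.
apply/eqP/eqP => [/ffunP /(_ i)|->]; last exact: evec0.
by rewrite !ffunE eqxx.
Qed.
Lemma sum_evec (g : Zn) : \sum_(i < n) evec i (g i) = g.
Proof.
apply/ffunP => j; rewrite sum_ffunE (bigD1 j) //= ffunE eqxx big1 ?addr0 // => i ij.
by rewrite ffunE eq_sym (negbTE ij).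
Qed.

Lemma cocycle_hr s b : cocycle s (0, b) = 1.
Proof. by rewrite /cocycle big1 // => i _; rewrite ffunE mul0r oppr0 expr0z. Qed.
Lemma cocycle_xl a t : cocycle (a, 0) t = 1.
Proof. by rewrite /cocycle big1 // => i _; rewrite ffunE mulr0 oppr0 expr0z. Qed.
Lemma cocycle_evec i a b s1 t2 :
  cocycle (s1, evec i b) (evec i a, t2) = q i ^ (- (a * b)).
Proof.
rewrite /cocycle (bigD1 i) //= !ffunE eqxx big1 ?mulr1 // => l /negbTE li.
by rewrite !ffunE li mul0r oppr0 expr0z.
Qed.
Lemma cocycle_evec_neq i j a b s1 t2 : i != j ->
  cocycle (s1, evec i b) (evec j a, t2) = 1.
Proof.
move=> ij; rewrite /cocycle big1 // => l _; rewrite !ffunE.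
case: (l =P i) => [->|_]; last by rewrite mulr0 oppr0 expr0z.
by rewrite (negbTE ij) mul0r oppr0 expr0z.
Qed.

Lemma pairD (a b a' b' : Zn) : ((a, b) : Z2n) + (a', b') = (a + a', b + b').
Proof. by []. Qed.
Lemma pair0 : ((0, 0) : Z2n) = 0.
Proof. by []. Qed.

Definition two_shifts_at (i : 'I_n) (O : linop) := exists c1 a1 b1 c2 a2 b2,
  O = c1 *: shift (evec i a1, evec i b1) + c2 *: shift (evec i a2, evec i b2).

Lemma two_shifts_at_comm i j O1 O2 : i != j ->
  two_shifts_at i O1 -> two_shifts_at j O2 -> O1 * O2 = O2 * O1.
Proof.
move=> ij [c1 [a1 [b1 [c2 [a2 [b2 ->]]]]]] [e1 [f1 [g1 [e2 [f2 [g2 ->]]]]]].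
have shiftC a b a' b' : shift (evec i a, evec i b) * shift (evec j a', evec j b') =
    shift (evec j a', evec j b') * shift (evec i a, evec i b).
  by rewrite !shiftM cocycle_evec_neq // cocycle_evec_neq 1?eq_sym // addrC.
rewrite !mulrDl !mulrDr -!scalerAl -!scalerAr !scalerA !shiftC.
by rewrite addrACA; congr (_ + _ + (_ + _)); rewrite mulrC.
Qed.

Definition Xop i := shift (evec i 1, 0).
Definition Hop i := shift (0, evec i 1).
Definition Hinvop i := shift (0, evec i (-1)).

Variable d : nat.

(* Forced by x_i y_i = (q_i h_i)^d - 1: y_i acts as x_i^-1 ((q_i h_i)^d - 1). *)
Definition Yop i :=
  q i ^+ d *: shift (evec i (-1), evec i d%:Z) - shift (evec i (-1), 0).

Lemma Xop_exp i p : Xop i ^+ p = shift (evec i p%:Z, 0).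
Proof.
elim: p => [|p IH]; first by rewrite expr0 evec0 pair0 shift0.
by rewrite exprS IH /Xop shiftM cocycle_xl scale1r pairD addr0 -evecD intS.
Qed.
Lemma Hop_exp i p : Hop i ^+ p = shift (0, evec i p%:Z).
Proof.
elim: p => [|p IH]; first by rewrite expr0 evec0 pair0 shift0.
by rewrite exprS IH /Hop shiftM cocycle_hr scale1r pairD addr0 -evecD intS.
Qed.
Lemma Hinvop_exp i p : Hinvop i ^+ p = shift (0, evec i (- p%:Z)).
Proof.
elim: p => [|p IH]; first by rewrite expr0 oppr0 evec0 pair0 shift0.
rewrite exprS IH /Hinvop shiftM cocycle_hr scale1r pairD addr0 -evecD intS.
by rewrite opprD.
Qed.

Lemma Hop_Hinvop i : Hop i * Hinvop i = 1 /\ Hinvop i * Hop i = 1.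
Proof.
rewrite /Hop /Hinvop !shiftM !cocycle_hr !scale1r !pairD !addr0 -!evecD.
by rewrite addrN addNr evec0 pair0 shift0.
Qed.

Lemma Xop_Hop i : Xop i * Hop i = (q i *: Hop i) * Xop i.
Proof.
rewrite /Xop /Hop -scalerAl !shiftM cocycle_hr scale1r !pairD addr0 add0r.
by rewrite cocycle_evec mulr1 exprN1 scalerA divff ?scale1r.
Qed.

Lemma Yop_Hop i : Yop i * Hop i = ((q i)^-1 *: Hop i) * Yop i.
Proof.
rewrite /Yop /Hop -scalerAl mulrBl mulrBr -scalerAl -scalerAr !shiftM.
rewrite !cocycle_hr !scale1r !pairD !addr0 -(evec0 i) !cocycle_evec evec0.
rewrite mulN1r opprK expr1z scalerBr !scalerA mulVf // scale1r !add0r.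
by rewrite mulrAC mulVf ?mul1r // [evec i 1 + _]addrC.
Qed.

Lemma Xop_Yop i : Xop i * Yop i = (q i *: Hop i) ^+ d - 1.
Proof.
rewrite /Xop /Yop mulrBr -scalerAr !shiftM !cocycle_xl !scale1r !pairD !addr0.
by rewrite -!evecD addrN evec0 add0r pair0 shift0 exprZn Hop_exp.
Qed.

Lemma Yop_Xop i : Yop i * Xop i = Hop i ^+ d - 1.
Proof.
rewrite /Xop /Yop mulrBl -scalerAl !shiftM !pairD ?addr0 ?add0r.
rewrite -!evecD addNr evec0 cocycle_xl scale1r pair0 shift0 Hop_exp cocycle_evec mul1r.
by rewrite scalerA -exprnN divff ?scale1r // expf_neq0.
Qed.

Lemma shift_gens_at i O : O \in [:: Hop i; Hinvop i; Xop i; Yop i] ->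
  two_shifts_at i O.
Proof.
rewrite !inE => /or4P [] /eqP ->.
- by exists 1, 0, 1, 0, 0, 0; rewrite scale0r addr0 scale1r evec0.
- by exists 1, 0, (-1), 0, 0, 0; rewrite scale0r addr0 scale1r evec0.
- by exists 1, 1, 0, 0, 0, 0; rewrite scale0r addr0 scale1r evec0.
- by exists (q i ^+ d), (-1), d%:Z, (-1), (-1), 0; rewrite scaleN1r evec0.
Qed.

Lemma shift_Arels : Arels d q Xop Yop Hop Hinvop.
Proof.
split; first exact: Hop_Hinvop.
split=> [i|i|i|i|i j ij a b ia jb].
- exact: Xop_Hop.
- exact: Yop_Hop.
- exact: Xop_Yop.
- exact: Yop_Xop.
- exact: two_shifts_at_comm ij (shift_gens_at ia) (shift_gens_at jb).
Qed.

Lemma box_support_Yop i : (0 < d)%N ->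
  box_support (Yop i) (evec i (-1)) 0 (evec i d%:Z).
Proof.
move=> d_gt0; have dz : d%:Z != 0 by rewrite eqz_nat -lt0n.
have top_bot : ((evec i (-1), evec i d%:Z) : Z2n) != (evec i (-1), 0).
  by apply/eqP => -[/eqP]; rewrite evec_eq0 (negbTE dz).
have coefY w : tcoef (Yop i) w =
    (if w == (evec i (-1), evec i d%:Z) then q i ^+ d else 0)
    - (if w == (evec i (-1), 0) then 1 else 0).
  by rewrite /Yop tcoefD tcoefN !tcoefZ_shift -[shift (_, 0)]scale1r tcoefZ_shift.
have evec_d_ge0 l : 0 <= evec i d%:Z l by rewrite ffunE; case: eqP.
split.
- by apply: qtorusD; [apply/qtorusZ/qtorus_shift|apply/qtorusN/qtorus_shift].
- move=> w; rewrite coefY.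
  case: (w =P (evec i (-1), evec i d%:Z)) => [-> _|_].
    by split => // l /=; rewrite ffunE evec_d_ge0 lexx.
  case: (w =P (evec i (-1), 0)) => [-> _|_]; last by rewrite subrr eqxx.
  by split => // l /=; rewrite ffunE lexx evec_d_ge0.
- by rewrite coefY eqxx (ifN_eqC _ _ top_bot) sub0r oppr_eq0 oner_eq0.
- by rewrite coefY eqxx (negbTE top_bot) subr0 expf_neq0.
Qed.

End QuantumTorus.

(** * Monomials spanning A *)

Section SkewCommutation.
Variables (k : fieldType) (A : algType k).

Lemma skew_commXr (g a : A) c p : g * a = c *: (a * g) ->
  g * a ^+ p = c ^+ p *: (a ^+ p * g).
Proof.
move=> E; elim: p => [|p IH]; first by rewrite !expr0 mul1r mulr1 scale1r.
rewrite exprS mulrA E -scalerAl -[a * g * _]mulrA IH -scalerAr scalerA exprS mulrA.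
by rewrite [c * _]mulrC.
Qed.

Lemma skew_commXl (g a : A) c p : g * a = c *: (a * g) ->
  g ^+ p * a = c ^+ p *: (a * g ^+ p).
Proof.
move=> E; elim: p => [|p IH]; first by rewrite !expr0 mul1r mulr1 scale1r.
rewrite exprSr -mulrA E -scalerAr [g ^+ p * (a * g)]mulrA IH -scalerAl scalerA.
by rewrite -mulrA -exprSr [in RHS]exprS.
Qed.

End SkewCommutation.

Section PresentedAlgebra.
Variables (k : fieldType) (n d : nat) (q : 'I_n -> k).
Hypothesis q_neq0 : forall i, q i != 0.
Variables (A : algType k) (x y h hi : 'I_n -> A).
Hypothesis hA : is_A d q x y h hi.
Local Notation Z2n := (Z2n n).

Lemma A_rels : Arels d q x y h hi. Proof. by case: hA. Qed.

Lemma h_hinv i : h i * hi i = 1. Proof. by case: A_rels => H _; case: (H i). Qed.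
Lemma hinv_h i : hi i * h i = 1. Proof. by case: A_rels => H _; case: (H i). Qed.
Lemma x_h i : x i * h i = q i *: (h i * x i).
Proof. by case: A_rels => _ [H _ _ _ _]; rewrite H scalerAl. Qed.
Lemma y_h i : y i * h i = (q i)^-1 *: (h i * y i).
Proof. by case: A_rels => _ [_ H _ _ _]; rewrite H scalerAl. Qed.
Lemma x_y i : x i * y i = q i ^+ d *: h i ^+ d - 1.
Proof. by case: A_rels => _ [_ _ H _ _]; rewrite H exprZn. Qed.
Lemma y_x i : y i * x i = h i ^+ d - 1.
Proof. by case: A_rels => _ [_ _ _ H _]; rewrite H. Qed.
Lemma gens_comm i j a b : i != j -> a \in [:: h i; hi i; x i; y i] ->
  b \in [:: h j; hi j; x j; y j] -> GRing.comm a b.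
Proof. by move=> ij ia jb; case: A_rels => _ [_ _ _ _ H]; exact: H ij _ _ ia jb. Qed.

Lemma h_x i : h i * x i = (q i)^-1 *: (x i * h i).
Proof. by rewrite x_h scalerA mulVf // scale1r. Qed.
Lemma h_y i : h i * y i = q i *: (y i * h i).
Proof. by rewrite y_h scalerA divff // scale1r. Qed.
Lemma hinv_x i : hi i * x i = q i *: (x i * hi i).
Proof.
rewrite -[hi i * x i]mulr1 -(h_hinv i) mulrA -[hi i * x i * h i]mulrA x_h.
by rewrite -scalerAr -scalerAl mulrA hinv_h mul1r.
Qed.
Lemma hinv_y i : hi i * y i = (q i)^-1 *: (y i * hi i).
Proof.
rewrite -[hi i * y i]mulr1 -(h_hinv i) mulrA -[hi i * y i * h i]mulrA y_h.
by rewrite -scalerAr -scalerAl mulrA hinv_h mul1r.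
Qed.

Definition xpow i (z : int) : A :=
  match z with Posz p => x i ^+ p | Negz p => y i ^+ p.+1 end.
Definition hpow i (z : int) : A := ipow (h i) (hi i) z.

Lemma xpowN i (p : nat) : xpow i (- p%:Z) = y i ^+ p.
Proof. by case: p => [|p] //=; rewrite expr0. Qed.

Lemma hpowS i z : hpow i (z + 1) = h i * hpow i z.
Proof.
case: z => [p|[|p]]; first by rewrite /hpow /= -exprS addn1.
  by rewrite /hpow /= expr1 h_hinv.
rewrite /hpow (_ : Negz p.+1 + 1 = Negz p); last by rewrite !NegzE; lia.
by rewrite /= [hi i ^+ p.+2]exprS mulrA h_hinv mul1r.
Qed.

Lemma hpowB1 i z : hpow i (z - 1) = hi i * hpow i z.
Proof.
case: z => [[|p]|p].
- by rewrite /hpow /= mulr1 expr1.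
- rewrite /hpow (_ : Posz p.+1 - 1 = Posz p) /=; last by lia.
  by rewrite exprS mulrA hinv_h mul1r.
- by rewrite /hpow (_ : Negz p - 1 = Negz p.+1) /= -?exprS // !NegzE; lia.
Qed.

Lemma hpowDn i z m : hpow i (z + m%:Z) = h i ^+ m * hpow i z.
Proof.
elim: m => [|m IH]; first by rewrite addr0 expr0 mul1r.
by rewrite -[in LHS]addn1 PoszD addrA hpowS IH exprS mulrA.
Qed.

Lemma h_xpow i a : exists c, h i * xpow i a = c *: (xpow i a * h i).
Proof.
case: a => [p|p] /=; first by exists ((q i)^-1 ^+ p); apply/skew_commXr/h_x.
by exists (q i ^+ p.+1); apply/skew_commXr/h_y.
Qed.
Lemma hinv_xpow i a : exists c, hi i * xpow i a = c *: (xpow i a * hi i).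
Proof.
case: a => [p|p] /=; first by exists (q i ^+ p); apply/skew_commXr/hinv_x.
by exists ((q i)^-1 ^+ p.+1); apply/skew_commXr/hinv_y.
Qed.

Definition two_terms i (w : A) := exists c1 a1 m1 c2 a2 m2,
  w = c1 *: (xpow i a1 * hpow i m1) + c2 *: (xpow i a2 * hpow i m2).

Lemma two_terms1 i c a m : two_terms i (c *: (xpow i a * hpow i m)).
Proof. by exists c, a, m, 0, a, m; rewrite scale0r addr0. Qed.

Lemma two_terms_hM i a m : two_terms i (h i * (xpow i a * hpow i m)).
Proof.
have [c E] := h_xpow i a.
by rewrite mulrA E -scalerAl -mulrA -hpowS; apply: two_terms1.
Qed.
Lemma two_terms_hinvM i a m : two_terms i (hi i * (xpow i a * hpow i m)).
Proof.
have [c E] := hinv_xpow i a.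
by rewrite mulrA E -scalerAl -mulrA -hpowB1; apply: two_terms1.
Qed.
Lemma two_terms_xM i a m : two_terms i (x i * (xpow i a * hpow i m)).
Proof.
case: a => [p|p].
  rewrite mulrA /= -exprS -(scale1r (x i ^+ p.+1 * _)).
  exact: (two_terms1 _ _ (Posz p.+1)).
rewrite mulrA /= exprS mulrA x_y mulrBl mul1r -scalerAl.
have [c E] : exists c, h i ^+ d * y i ^+ p = c *: (y i ^+ p * h i ^+ d).
  by exists ((q i ^+ d) ^+ p); apply/skew_commXr/skew_commXl/h_y.
rewrite E scalerA mulrBl -scalerAl -[y i ^+ p * h i ^+ d * _]mulrA -hpowDn -!xpowN.
by exists (q i ^+ d * c), (- p%:Z), (m + d%:Z), (-1), (- p%:Z), m; rewrite scaleN1r.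
Qed.
Lemma two_terms_yM i a m : two_terms i (y i * (xpow i a * hpow i m)).
Proof.
case: a => [[|p]|p].
- rewrite /= expr0 mul1r -(scale1r (y i * _)) -(expr1 (y i)).
  exact: (two_terms1 _ _ (Negz 0)).
- rewrite mulrA /= exprS mulrA y_x mulrBl mul1r.
  have [c E] : exists c, h i ^+ d * x i ^+ p = c *: (x i ^+ p * h i ^+ d).
    by exists (((q i)^-1 ^+ d) ^+ p); apply/skew_commXr/skew_commXl/h_x.
  rewrite E mulrBl -scalerAl -[x i ^+ p * h i ^+ d * _]mulrA -hpowDn.
  by exists c, (Posz p), (m + d%:Z), (-1), (Posz p), m; rewrite scaleN1r.
- rewrite mulrA /= -exprS -(scale1r (y i ^+ p.+2 * _)).
  exact: (two_terms1 _ _ (Negz p.+1)).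
Qed.

Definition mono_factor (f : Z2n) i := xpow i (f.1 i) * hpow i (f.2 i).
Definition mono (f : Z2n) := \prod_(i < n) mono_factor f i.
Definition mono_span (w : A) :=
  exists l : seq (k * Z2n), w = \sum_(p <- l) p.1 *: mono p.2.

Lemma mono0 : mono 0 = 1.
Proof. by rewrite /mono big1 // => i _; rewrite /mono_factor !ffunE /= expr0 mul1r. Qed.

Lemma gens_comm_mono_factor j i f g : i != j -> g \in [:: h j; hi j; x j; y j] ->
  GRing.comm g (mono_factor f i).
Proof.
move=> ij jg; have c b : b \in [:: h i; hi i; x i; y i] -> GRing.comm g b.
  by apply: gens_comm jg; rewrite eq_sym.
apply: commrM; case: (f.1 i) (f.2 i) => [p|p] [r|r];
  by apply: commrX; apply: c; rewrite !inE eqxx ?orbT.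
Qed.

Definition mono_upd (f : Z2n) j (a m : int) : Z2n :=
  ([ffun i => if i == j then a else f.1 i], [ffun i => if i == j then m else f.2 i]).

Lemma mono_mono_upd f j a m :
  \prod_(i < n) (if i == j then xpow j a * hpow j m else mono_factor f i) =
  mono (mono_upd f j a m).
Proof. by apply: eq_bigr => i _; rewrite /mono_factor !ffunE; case: eqP => // ->. Qed.

Lemma mono_span_mono f : mono_span (mono f).
Proof. by exists [:: (1, f)]; rewrite big_seq1 scale1r. Qed.
Lemma mono_span_lin c u v : mono_span u -> mono_span v -> mono_span (c *: u + v).
Proof.
case=> l1 -> [l2 ->]; exists ([seq (c * p.1, p.2) | p <- l1] ++ l2).
rewrite big_cat big_map scaler_sumr; congr (_ + _); apply: eq_bigr => p _.
by rewrite scalerA.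
Qed.
Lemma mono_span_sum (l : seq (k * Z2n)) (G : Z2n -> A) :
  (forall f, mono_span (G f)) -> mono_span (\sum_(p <- l) p.1 *: G p.2).
Proof.
move=> spanG; elim: l => [|p l IH]; first by exists [::]; rewrite !big_nil.
by rewrite big_cons; apply: mono_span_lin.
Qed.

(* A generator at coordinate j commutes with the factors at the other
   coordinates and rewrites the factor at j as a combination of two. *)
Lemma mono_span_genM j g f : g \in [:: h j; hi j; x j; y j] -> mono_span (g * mono f).
Proof.
move=> jg; have [c1 [a1 [m1 [c2 [a2 [m2 E]]]]]] : two_terms j (g * mono_factor f j).
  move: jg; rewrite !inE => /or4P [] /eqP ->; [exact: two_terms_hM|
    exact: two_terms_hinvM|exact: two_terms_xM|exact: two_terms_yM].
rewrite /mono (mulr_prod_at (index_enum_uniq _) (mem_index_enum j)); last first.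
  by move=> i ij; exact: gens_comm_mono_factor ij jg.
rewrite (eq_bigr (fun i => if i == j then c1 *: (xpow j a1 * hpow j m1) +
    c2 *: (xpow j a2 * hpow j m2) else mono_factor f i)); last first.
  by move=> i _; case: eqP => // ->.
rewrite (prod_at_lin2 _ _ _ _ _ (index_enum_uniq _) (mem_index_enum j)).
rewrite !mono_mono_upd.
exists [:: (c1, mono_upd f j a1 m1); (c2, mono_upd f j a2 m2)].
by rewrite big_cons big_seq1.
Qed.

Lemma mono_span_all w : mono_span w.
Proof.
(* Induct on the stronger claim that w times any monomial is spanned. *)
pose P w := forall f, mono_span (w * mono f).
have P1 : P 1 by move=> f; rewrite mul1r; apply: mono_span_mono.
have Plin c u v : P u -> P v -> P (c *: u + v).
  by move=> Pu Pv f; rewrite mulrDl -scalerAl; apply: mono_span_lin.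
have PM u v : P u -> P v -> P (u * v).
  move=> Pu Pv f; have [l E] := Pv f.
  rewrite -mulrA E mulr_sumr; under eq_bigr do rewrite -scalerAr.
  exact: (@mono_span_sum l (fun f => u * mono f) Pu).
have Pgen i : [/\ P (x i), P (y i), P (h i) & P (hi i)].
  by split => f; apply: (@mono_span_genM i); rewrite !inE eqxx ?orbT.
by have := is_A_ind P1 Plin PM hA Pgen w (0 : Z2n); rewrite mono0 mulr1.
Qed.

End PresentedAlgebra.

(** * The representation of A by twisted shifts *)

Section Representation.
Variables (k : fieldType) (n d : nat) (q : 'I_n -> k).
Hypothesis q_neq0 : forall i, q i != 0.
Hypothesis d_gt0 : (0 < d)%N.
Variables (A : algType k) (x y h hi : 'I_n -> A).
Hypothesis hA : is_A d q x y h hi.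
Variable rep : A -> linop k (Z2n n).
Hypothesis rep_hom : alg_hom rep.
Hypothesis rep_gens : forall i, [/\ rep (x i) = Xop q i, rep (y i) = Yop q d i,
  rep (h i) = Hop q i & rep (hi i) = Hinvop q i].
Local Notation Zn := {ffun 'I_n -> int}.
Local Notation Z2n := (Z2n n).
Local Notation tcoef := (tcoef q).
Local Notation qtorus := (qtorus q).
Local Notation box_support := (box_support q).
Local Notation xpow := (xpow x y).
Local Notation hpow := (hpow h hi).
Local Notation mono := (mono x y h hi).

Lemma rep1 : rep 1 = 1. Proof. by case: rep_hom. Qed.
Lemma repD a b : rep (a + b) = rep a + rep b. Proof. by case: rep_hom. Qed.
Lemma repM a b : rep (a * b) = rep a * rep b. Proof. by case: rep_hom. Qed.
Lemma repZ c a : rep (c *: a) = c *: rep a. Proof. by case: rep_hom. Qed.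
Lemma rep0 : rep 0 = 0.
Proof. by apply: (@addrI _ (rep 0)); rewrite -repD !addr0. Qed.
Lemma rep_sum (I : Type) (r : seq I) (G : I -> A) :
  rep (\sum_(i <- r) G i) = \sum_(i <- r) rep (G i).
Proof. exact: (big_morph rep repD rep0). Qed.
Lemma rep_prod (I : Type) (r : seq I) (G : I -> A) :
  rep (\prod_(i <- r) G i) = \prod_(i <- r) rep (G i).
Proof. exact: (big_morph rep repM rep1). Qed.
Lemma repX a p : rep (a ^+ p) = rep a ^+ p.
Proof. by elim: p => [|p IH]; rewrite ?expr0 ?rep1 // !exprS repM IH. Qed.

Lemma qtorus_rep w : qtorus (rep w).
Proof.
pose P w := qtorus (rep w).
have P1 : P 1 by rewrite /P rep1 -(shift0 q); apply: qtorus_shift.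
have Plin c u v : P u -> P v -> P (c *: u + v).
  by move=> Pu Pv; rewrite /P repD repZ; apply: qtorusD => //; apply: qtorusZ.
have PM u v : P u -> P v -> P (u * v) by move=> Pu Pv; rewrite /P repM; apply: qtorusM.
apply: (is_A_ind P1 Plin PM hA) => i; rewrite /P.
have [-> -> -> ->] := rep_gens i; split; try exact: qtorus_shift.
by apply: qtorusD; [apply/qtorusZ/qtorus_shift|apply/qtorusN/qtorus_shift].
Qed.

(* The extra h-degree created by y_i^p, which acts as x_i^-p (q_i^d h_i^d - 1)^p. *)
Definition yspread (a : int) : int :=
  match a with Posz _ => 0 | Negz p => (d * p.+1)%N%:Z end.

Lemma yspread_ge0 a : 0 <= yspread a. Proof. by case: a. Qed.
Lemma yspread_eq0 a : yspread a = 0 -> 0 <= a.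
Proof.
case: a => // p /= /eqP; rewrite eqz_nat muln_eq0 orbF => /eqP d0.
by move: d_gt0; rewrite d0.
Qed.

Lemma box_support_xpow i a :
  box_support (rep (xpow i a)) (evec i a) 0 (evec i (yspread a)).
Proof.
case: a => [p|p] /=; rewrite repX.
  have [-> _ _ _] := rep_gens i; rewrite (Xop_exp q_neq0).
  have := box_support_shift q_neq0 (evec i p, 0) (oner_neq0 k).
  by rewrite scale1r evec0.
have [_ -> _ _] := rep_gens i.
have := box_supportX q_neq0 p.+1 (box_support_Yop q_neq0 i d_gt0).
by rewrite !evecMn mul0rn NegzE mulNrn natz -mulr_natr natz -PoszM.
Qed.

Lemma box_support_hpow i m :
  box_support (rep (hpow i m)) 0 (evec i m) (evec i m).
Proof.
have := box_support_shift q_neq0 (0, evec i m) (oner_neq0 k); rewrite scale1r /=.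
case: m => [p|p] /=; rewrite repX.
  by have [_ _ -> _] := rep_gens i; rewrite (Hop_exp q_neq0).
by have [_ _ _ ->] := rep_gens i; rewrite (Hinvop_exp q_neq0) NegzE.
Qed.

Definition mono_top (f : Z2n) : Zn := [ffun i => yspread (f.1 i) + f.2 i].

Lemma box_support_mono f : box_support (rep (mono f)) f.1 f.2 (mono_top f).
Proof.
have factor i : box_support (rep (mono_factor x y h hi f i))
    (evec i (f.1 i)) (evec i (f.2 i)) (evec i (yspread (f.1 i) + f.2 i)).
  have := box_supportM q_neq0 (box_support_xpow i (f.1 i))
    (box_support_hpow i (f.2 i)).
  by rewrite -repM addr0 add0r -evecD.
have := box_support_prod q_neq0 (index_enum 'I_n) factor.
rewrite -rep_prod !sum_evec.
by rewrite -[mono_top f]sum_evec; under [in X in _ -> X]eq_bigr do rewrite ffunE.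
Qed.

Definition sumz (g : Zn) : int := \sum_(i < n) g i.

Lemma sumz_le_eq (a b : Zn) : (forall i, a i <= b i) -> sumz b <= sumz a -> a = b.
Proof.
move=> le_ab le_sum.
have sum0 : \sum_(j < n) (b j - a j) = 0.
  apply/eqP; rewrite sumrB -/(sumz b) -/(sumz a) subr_eq0 eq_le le_sum /=.
  exact: ler_sum.
apply/ffunP => i; apply/eqP; rewrite eq_sym -subr_eq0; apply/eqP.
by apply: (psumr_eq0P (P := predT)) sum0 _ _ => // j _; rewrite subr_ge0.
Qed.

Lemma rep_mono_coef_lowest f g :
  tcoef (rep (mono g)) f != 0 -> sumz f.2 <= sumz g.2 -> g = f.
Proof.
case: (box_support_mono g) => _ supp _ _ /supp [e1 box] le_sum.
have e2 : g.2 = f.2 by apply: sumz_le_eq => // i; case/andP: (box i).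
by case: f g e1 e2 {box le_sum supp} => [? ?] [? ?] /= -> ->.
Qed.

Lemma rep_mono_coef_highest f g :
  tcoef (rep (mono g)) (f.1, mono_top f) != 0 -> sumz g.2 <= sumz f.2 -> g = f.
Proof.
case: (box_support_mono g) => _ supp _ _ /supp [/= e1 box] le_sum.
have e2 : f.2 = g.2.
  apply: sumz_le_eq => // i; case/andP: (box i) => _.
  by rewrite !ffunE e1 lerD2l.
by case: f g e1 e2 {box le_sum supp} => [? ?] [? ?] /= -> ->.
Qed.

Section MonoExpansion.
Variables (U : seq Z2n) (C : Z2n -> k) (s0 : Z2n).
Hypothesis uniqU : uniq U.
Hypothesis C_neq0 : forall f, f \in U -> C f != 0.
Local Notation w := (\sum_(f <- U) C f *: mono f).
Hypothesis supp_w : forall z, tcoef (rep w) z != 0 -> z = s0.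

Lemma rep_expansion : rep w = \sum_(f <- U) C f *: rep (mono f).
Proof. by rewrite rep_sum; apply: eq_bigr => f _; rewrite repZ. Qed.

Lemma expansion_lowest f : f \in U ->
  (forall g, g \in U -> g.1 = f.1 -> sumz f.2 <= sumz g.2) -> f = s0.
Proof.
move=> fU fmin; apply: supp_w; rewrite rep_expansion.
apply: (tcoef_sum_single (f := f)); rewrite ?C_neq0 //.
  by case: (box_support_mono f) => _ _ + _; rewrite -surjective_pairing.
move=> g gU gf; have [//|nz] := eqVneq (tcoef (rep (mono g)) f) 0.
have [_ supp _ _] := box_support_mono g; have [e1 _] := supp _ nz.
by move: gf; rewrite (rep_mono_coef_lowest nz (fmin _ gU (esym e1))) eqxx.
Qed.

Lemma expansion_highest f : f \in U ->
  (forall g, g \in U -> g.1 = f.1 -> sumz g.2 <= sumz f.2) ->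
  (f.1, mono_top f) = s0.
Proof.
move=> fU fmax; apply: supp_w; rewrite rep_expansion.
apply: (tcoef_sum_single (f := f)); rewrite ?C_neq0 //.
  by case: (box_support_mono f).
move=> g gU gf; have [//|nz] := eqVneq (tcoef (rep (mono g)) (f.1, mono_top f)) 0.
have [_ supp _ _] := box_support_mono g; have [/= e1 _] := supp _ nz.
by move: gf; rewrite (rep_mono_coef_highest nz (fmax _ gU (esym e1))) eqxx.
Qed.

Lemma expansion_fst f : f \in U -> f.1 = s0.1.
Proof.
move=> fU; pose K := [seq g <- U | g.1 == f.1].
have fK : f \in K by rewrite mem_filter eqxx fU.
have K_neq_nil : K != [::] by apply: contraTneq fK => ->.
have [g] := seq_ex_min_key (fun g : Z2n => sumz g.2) K_neq_nil.
rewrite mem_filter => /andP [/eqP gf gU] gmin.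
rewrite -gf (expansion_lowest gU) // => g' g'U g'g.
by apply: gmin; rewrite mem_filter g'g gf eqxx.
Qed.

Lemma expansion_eq : U != [::] ->
  [/\ s0 \in U, forall f, f \in U -> f = s0 & forall i, 0 <= s0.1 i].
Proof.
move=> U_neq_nil.
have [g1 g1U g1min] := seq_ex_min_key (fun g : Z2n => sumz g.2) U_neq_nil.
have [g2 g2U g2max] := seq_ex_min_key (fun g : Z2n => - sumz g.2) U_neq_nil.
have e1 : g1 = s0 by apply: expansion_lowest => // g gU _; apply: g1min.
have e2 : (g2.1, mono_top g2) = s0.
  by apply: expansion_highest => // g gU _; rewrite -lerN2; apply: g2max.
have top : sumz (mono_top g2) = \sum_(i < n) yspread (s0.1 i) + sumz g2.2.
  rewrite /sumz -big_split /=; apply: eq_bigr => i _.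
  by rewrite ffunE (expansion_fst g2U).
have top_s0 : mono_top g2 = s0.2 by rewrite -e2.
have spread0 : \sum_(i < n) yspread (s0.1 i) = 0.
  apply/eqP; rewrite eq_le sumr_ge0 ?andbT => [|i _]; last exact: yspread_ge0.
  by rewrite -(lerD2r (sumz g2.2)) add0r -top top_s0 -e1 g1min.
split=> [|f fU|i]; first by rewrite -e1.
  apply: expansion_lowest => // g gU _; apply: le_trans (g1min _ gU).
  by rewrite e1 -top_s0 top spread0 add0r -lerN2 g2max.
apply: yspread_eq0; apply: (psumr_eq0P (P := predT)) spread0 _ _ => // j _.
exact: yspread_ge0.
Qed.

End MonoExpansion.

Lemma rep_single_shift (w : A) s0 :
  w != 0 -> (forall z, tcoef (rep w) z != 0 -> z = s0) ->
  exists2 c, c != 0 & w = c *: mono s0 /\ forall i, 0 <= s0.1 i.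
Proof.
move=> w0 supp; have [l El] := mono_span_all q_neq0 hA w.
pose C := listcoef l; pose U := [seq f <- undup (map snd l) | C f != 0].
have Ew : w = \sum_(f <- U) C f *: mono f.
  rewrite El big_scale_undup big_filter [RHS]big_mkcond /=; apply: eq_bigr => f _.
  by rewrite -/C; case: (eqVneq (C f) 0) => [->|]; rewrite ?scale0r ?eqxx.
have uU : uniq U by rewrite filter_uniq // undup_uniq.
have CU f : f \in U -> C f != 0 by rewrite mem_filter => /andP [].
have U_neq_nil : U != [::] by apply: contra_neq w0 => U0; rewrite Ew U0 big_nil.
rewrite Ew in supp; have [s0U all_s0 s0_ge0] := expansion_eq uU CU supp U_neq_nil.
exists (C s0); first exact: CU.
split=> //; rewrite Ew (bigD1_seq s0) //= big1_seq ?addr0 // => g /andP [gs0 gU].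
by rewrite (all_s0 _ gU) eqxx in gs0.
Qed.

(* [u] and [v] are single monomials whose nonnegative x-exponents add up to 0. *)
Lemma rinvertible_hmono u v : u * v = 1 ->
  exists2 c, c != 0 & exists m : Zn, u = c *: mono (0, m).
Proof.
move=> uv; have u0 : u != 0.
  by apply: contra_eq_neq uv => ->; rewrite mul0r eq_sym oner_neq0.
have v0 : v != 0.
  by apply: contra_eq_neq uv => ->; rewrite mulr0 eq_sym oner_neq0.
have repuv : rep u * rep v = 1 by rewrite -repM uv rep1.
have [s0 [t0 [st0 supp_u supp_v]]] :=
  qtorus_unit q_neq0 (qtorus_rep u) (qtorus_rep v) repuv.
have [c c0 [Eu s0_ge0]] := rep_single_shift u0 supp_u.
have [_ _ [_ t0_ge0]] := rep_single_shift v0 supp_v.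
have s01 : s0.1 = 0.
  apply/ffunP => i; have := congr1 (fun z : Z2n => z.1 i) st0; rewrite /= !ffunE.
  have := s0_ge0 i; have := t0_ge0 i; move: (s0.1 i) (t0.1 i) => a b; lia.
by exists c => //; exists s0.2; rewrite Eu [s0]surjective_pairing s01.
Qed.

End Representation.

Theorem lemma2p2 (k : fieldType) (n d : nat) (q : 'I_n -> k)
    (hn : (0 < n)%N) (hd : (0 < d)%N)
    (hq0 : forall i, q i != 0) (hqd : forall i, q i ^+ d != 1)
    (A : algType k) (x y h hi : 'I_n -> A) (hA : is_A d q x y h hi)
    (u : A) (hu : exists v : A, u * v = 1 /\ v * u = 1) :
  exists (gamma : k) (m : 'I_n -> int),
    gamma != 0 /\ u = gamma *: \prod_(i < n) ipow (h i) (hi i) (m i).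
Proof.
have [_ univ _] := hA.
have [rep [rep_hom rep_gens]] := univ _ _ _ _ _ (shift_Arels hq0 d).
have [v [uv _]] := hu.
have [gamma gamma0 [m ->]] := rinvertible_hmono hq0 hd hA rep_hom rep_gens uv.
exists gamma, m; split => //; congr (_ *: _); apply: eq_bigr => i _.
by rewrite /mono_factor /= ffunE /= expr0 mul1r.
Qed.
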